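(* Let $\mathcal{A}$ be any algorithm in the $\mathsf{LOCAL}$ model that solves the distributed spanning tree reconfiguration problem in one step of $1$-simultaneous add and delete, i.e., for every connected graph $G=(V,E)$ and every pair of spanning trees $T_1, T_2$ of $G$ (given as input as described in the context), $\mathcal{A}$ outputs a valid single-step $1$-simultaneous add and delete reconfiguration schedule from $T_1$ to $T_2$. Then $\mathcal{A}$ requires $\Omega(n)$ rounds in the worst case, where $n$ is the number of nodes of the graph.
   Context: The $\mathsf{LOCAL}$ model: the communication network is an $n$-node graph $G$ whose nodes have unique identifiers; computation proceeds in synchronous rounds, in each of which every node may send a message of arbitrary size to each of its neighbours in $G$ and perform arbitrary local computation; the running time is the number of rounds. Distributed spanning tree reconfiguration problem: given a connected graph $G=(V,E)$ (which is the communication network) and two spanning trees $T_1,T_2$ of $G$, each node $v\in V$ initially knows only its own incident edges in $T_1$ and in $T_2$ (the trees are unrooted: no parent pointers are given). A $k$-simultaneous add and delete step applied to a spanning tree $T$ consists of each node $v$ choosing a set $A_v$ of at most $k$ edges incident to $v$ to add and a set $D_v$ of at most $k$ edges incident to $v$ (in $T$) to delete, such that no edge belongs to $A_u$ and $A_w$ for two different nodes $u\ne w$ and no edge belongs to $D_u$ and $D_w$ for two different nodes $u\neq w$; the result is $(T\setminus \bigcup_v D_v)\cup \bigcup_v A_v$. A valid single-step $k$-simultaneous add and delete reconfiguration schedule from $T_1$ to $T_2$ is one such step applied to $T_1$ whose result is exactly $T_2$; the algorithm must output it distributedly, i.e., each node $v$ outputs its own sets $A_v$ and $D_v$. *)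

From mathcomp Require Import all_boot.
Set Implicit Arguments. Unset Strict Implicit. Unset Printing Implicit Defensive.

Definition simple_graph n (G : rel 'I_n) : Prop := irreflexive G /\ symmetric G.

Definition connected_graph n (G : rel 'I_n) : Prop := forall u v, connect G u v.

Definition acyclic n (T : rel 'I_n) : Prop :=
  ~ exists p : seq 'I_n, [/\ cycle T p, uniq p & 3 <= size p].

Definition spanning_tree n (G T : rel 'I_n) : Prop :=
  [/\ symmetric T, subrel T G, connected_graph T & acyclic T].

(* A single 1-simultaneous add and delete step from T1 yielding exactly T2.
   A v (resp. D v) is the set of other endpoints u of the edges {v,u} that
   node v adds (resp. deletes). *)
Definition valid_step1 n (G T1 T2 : rel 'I_n) (A D : 'I_n -> {set 'I_n}) : Prop :=
  [/\ forall v, #|A v| <= 1,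
      forall v, #|D v| <= 1,
      forall v u, u \in A v -> G v u,
      forall v u, u \in D v -> T1 v u &
      (forall v u, ~ (u \in A v /\ v \in A u))] /\
  [/\ forall v u, ~ (u \in D v /\ v \in D u) &
      forall u v, T2 u v =
        (T1 u v && ~~ ((u \in D v) || (v \in D u))) || ((u \in A v) || (v \in A u))].

(* Deterministic LOCAL algorithm with arbitrary state type S and message type M.
   la_init n myid nbrs : initial state, knowing n, own identifier and, for each
     G-neighbour (listed in increasing identifier order), its identifier and
     whether the incident edge lies in T1 and in T2;
   la_send s j : message sent to the neighbour with identifier j;
   la_recv s msgs : new state after receiving (sender id, message) pairs;
   la_out s : (identifiers of the A_v endpoints, identifiers of the D_v endpoints). *)
Record local_algo (S M : Type) := LocalAlgo {
  la_init : nat -> nat -> seq (nat * bool * bool) -> S;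
  la_send : S -> nat -> M;
  la_recv : S -> seq (nat * M) -> S;
  la_out : S -> seq nat * seq nat }.

Definition nbrs n (G : rel 'I_n) (id : 'I_n -> nat) (v : 'I_n) : seq 'I_n :=
  sort (fun a b => id a <= id b) [seq u <- enum 'I_n | G v u].

Fixpoint la_state S M (A : local_algo S M) n (G T1 T2 : rel 'I_n)
    (id : 'I_n -> nat) (r : nat) (v : 'I_n) : S :=
  match r with
  | 0 => la_init A n (id v) [seq (id u, T1 v u, T2 v u) | u <- nbrs G id v]
  | r'.+1 =>
      la_recv A (la_state A G T1 T2 id r' v)
        [seq (id u, la_send A (la_state A G T1 T2 id r' u) (id v)) | u <- nbrs G id v]
  end.

Definition la_output S M (A : local_algo S M) n (G T1 T2 : rel 'I_n)
    (id : 'I_n -> nat) (t : nat) (v : 'I_n) : seq nat * seq nat :=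
  la_out A (la_state A G T1 T2 id t v).

Definition output_ok n (G : rel 'I_n) (id : 'I_n -> nat) (v : 'I_n) (o : seq nat * seq nat) :=
  [/\ size o.1 <= 1, size o.2 <= 1,
      all (fun x => has (fun u => id u == x) (nbrs G id v)) o.1 &
      all (fun x => has (fun u => id u == x) (nbrs G id v)) o.2].

Definition out_add n (G : rel 'I_n) (id : 'I_n -> nat) (o : 'I_n -> seq nat * seq nat)
  (v : 'I_n) : {set 'I_n} := [set u | G v u && (id u \in (o v).1)].
Definition out_del n (G : rel 'I_n) (id : 'I_n -> nat) (o : 'I_n -> seq nat * seq nat)
  (v : 'I_n) : {set 'I_n} := [set u | G v u && (id u \in (o v).2)].

Definition solves_in S M (A : local_algo S M) (T : nat -> nat) : Prop :=
  forall n (G T1 T2 : rel 'I_n) (id : 'I_n -> nat),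
    simple_graph G -> connected_graph G -> injective id ->
    spanning_tree G T1 -> spanning_tree G T2 ->
    let o := la_output A G T1 T2 id (T n) in
    (forall v, output_ok G id v (o v)) /\
    valid_step1 G T1 T2 (out_add G id o) (out_del G id o).

From mathcomp Require Import all_boot zify.
Set Implicit Arguments. Unset Strict Implicit. Unset Printing Implicit Defensive.

(* Let G be the square of the path 0 - 1 - ... - (n-1), T1 the path itself and T2 the
   union of the paths through the even and through the odd nodes, joined by the edge
   {0, 1}.  No path edge {u, u+1} with u > 0 lies in T2, so one of its endpoints deletes
   it; as a node deletes at most one edge, once a node deletes its left edge every node
   to its right does too.  Away from the ends the instance looks the same after a
   reflection, so a node cannot learn in r rounds which of its two path edges to delete.
   Copying the identifiers around two far-apart deleting nodes, each suitably reflected,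
   into a fresh instance yields a left deletion to the left of a right deletion, which
   is impossible unless n = O(r). *)

Lemma mem_nbrs n (G : rel 'I_n) (id : 'I_n -> nat) u w : (w \in nbrs G id u) = G u w.
Proof. by rewrite /nbrs mem_sort mem_filter mem_enum andbT. Qed.

Lemma nbrs_uniq n (G : rel 'I_n) (id : 'I_n -> nat) u : uniq (nbrs G id u).
Proof. by rewrite sort_uniq filter_uniq // enum_uniq. Qed.

Lemma nbrs_relabel n (G G' : rel 'I_n) (id id' : 'I_n -> nat) (phi : 'I_n -> 'I_n) u :
  injective id -> injective id' ->
  (forall w, G u w -> id' (phi w) = id w) ->
  (forall w, G u w -> G' (phi u) (phi w)) ->
  (forall y, G' (phi u) y -> exists2 w, G u w & phi w = y) ->
  nbrs G' id' (phi u) = map phi (nbrs G id u).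
Proof.
move=> id_inj id'_inj id'_phi G'_phi G'_onto.
have le_id'_trans : transitive (fun a b : 'I_n => id' a <= id' b) by move=> ? ? ?; lia.
have le_id'_anti : antisymmetric (fun a b : 'I_n => id' a <= id' b).
  by move=> a b /andP[? ?]; apply: id'_inj; lia.
apply: (sorted_eq le_id'_trans le_id'_anti); first by apply: sort_sorted => a b; apply: leq_total.
  rewrite sorted_map (eq_in_sorted (P := mem (nbrs G id u)) (e' := fun a b => id a <= id b)).
  - by apply: sort_sorted => a b; apply: leq_total.
  - by move=> a b /[!mem_nbrs] Ga Gb /=; rewrite !id'_phi.
  - exact/allP.
apply: uniq_perm; rewrite ?nbrs_uniq //.
  rewrite map_inj_in_uniq ?nbrs_uniq // => a b; rewrite !mem_nbrs => Ga Gb eab.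
  by apply: id_inj; rewrite -id'_phi // eab id'_phi.
move=> y; rewrite mem_nbrs; apply/idP/mapP => [/G'_onto[w Gw <-] | [w]].
  by exists w; rewrite ?mem_nbrs.
by rewrite mem_nbrs => /G'_phi Gw ->.
Qed.

Section Locality.
Variables (n : nat) (G T1 T2 : rel 'I_n) (id : 'I_n -> nat).
Variables (G' T1' T2' : rel 'I_n) (id' : 'I_n -> nat) (phi : 'I_n -> 'I_n).

Definition same_input_at (u : 'I_n) : Prop :=
  [/\ id' (phi u) = id u,
      nbrs G' id' (phi u) = map phi (nbrs G id u) &
      forall w, G u w -> [/\ id' (phi w) = id w, T1' (phi u) (phi w) = T1 u w &
                             T2' (phi u) (phi w) = T2 u w]].

Fixpoint same_view (r : nat) (u : 'I_n) : Prop :=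
  same_input_at u /\ if r is r'.+1 then forall w, G u w -> same_view r' w else True.

Lemma same_viewS r u : same_view r.+1 u -> same_view r u.
Proof.
elim: r u => [|r IHr] u [input_u view_nbrs]; split=> // w /view_nbrs.
exact: IHr.
Qed.

Lemma la_state_same_view S M (A : local_algo S M) r u : same_view r u ->
  la_state A G' T1' T2' id' r (phi u) = la_state A G T1 T2 id r u.
Proof.
elim: r u => [|r IHr] u view_u; have [[id_u nbrs_u input_nbrs] view_nbrs] := view_u.
  rewrite /= id_u nbrs_u -map_comp; congr la_init; apply/eq_in_map => w /[!mem_nbrs].
  by case/input_nbrs => /= -> -> ->.
rewrite /= IHr; last exact: same_viewS.
rewrite nbrs_u -map_comp id_u; congr la_recv.
apply/eq_in_map => w /[!mem_nbrs] Guw /=.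
have [-> _ _] := input_nbrs _ Guw; rewrite IHr //; exact: view_nbrs.
Qed.
End Locality.

Lemma acyclic_of_lower_nbr_uniq n (T : rel 'I_n) : symmetric T ->
  (forall u a b : 'I_n, T u a -> T u b -> a < u -> b < u -> a = b) -> acyclic T.
Proof.
(* The largest node m of a cycle has two distinct smaller neighbours on it. *)
move=> Tsym lower_uniq [c [cycle_c uniq_c size_c]].
have [x0 c_x0] : exists x0, x0 \in c.
  by case: c size_c {cycle_c uniq_c} => // x c _; exists x; rewrite mem_head.
have [m c_m m_max] := arg_maxnP (@nat_of_ord n) c_x0.
have [i s rot_c] := rot_to c_m.
have lt_m y : y \in s -> y < m.
  move=> s_y; have c_y : y \in c by rewrite -(mem_rot i) rot_c inE s_y orbT.
  have le_ym : y <= m := m_max y c_y.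
  rewrite ltn_neqAle le_ym andbT; apply: contraTneq s_y => /ord_inj ->.
  by move: uniq_c; rewrite -(rot_uniq i) rot_c => /andP[].
move: cycle_c uniq_c size_c; rewrite -(rot_cycle i) -(rot_uniq i) -(size_rot i) rot_c.
case: s rot_c lt_m => [|a [|b s]] //= _ lt_m.
rewrite rcons_path inE negb_or => /and3P[Tma _ /andP[_ Tlm]] /and3P[/andP[_ m_bs] a_bs _] _.
have bs_l : last b s \in b :: s by exact: mem_last.
have a_lt_m : a < m by rewrite lt_m ?mem_head.
have l_lt_m : last b s < m by rewrite lt_m // inE bs_l orbT.
rewrite Tsym in Tlm; have a_l := lower_uniq _ _ _ Tma Tlm a_lt_m l_lt_m.
by move: a_bs; rewrite a_l bs_l.
Qed.

Lemma connected_of_lower_nbr n (T : rel 'I_n) : symmetric T ->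
  (forall v : 'I_n, 0 < v -> exists2 w : 'I_n, w < v & T v w) -> connected_graph T.
Proof.
move=> Tsym lower_nbr u v.
have n_gt0 : 0 < n := leq_ltn_trans (leq0n u) (ltn_ord u).
pose z := Ordinal n_gt0.
suff to_z w : connect T w z by rewrite (connect_trans (to_z u)) // (sym_connect_sym Tsym) to_z.
have [k lt_wk] := ubnP w; elim: k w lt_wk => // k IHk w /[!ltnS] le_wk.
have [w0 | w_gt0] := posnP w; first by rewrite (_ : w = z) ?connect0 //; exact: ord_inj.
have [w' lt_w'w Tww'] := lower_nbr w w_gt0.
apply: connect_trans (connect1 Tww') (IHk w' _); lia.
Qed.

Definition path_sq {n} (u w : 'I_n) : bool := [&& u != w :> nat, u < w + 3 & w < u + 3].
Definition path_tree {n} (u w : 'I_n) : bool := (u.+1 == w :> nat) || (w.+1 == u :> nat).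
Definition skip_tree {n} (u w : 'I_n) : bool :=
  [|| u + 2 == w :> nat, w + 2 == u :> nat | u + w == 1].

Section HardInstance.
Variable n : nat.

Lemma path_sq_simple : simple_graph (@path_sq n).
Proof. by split=> [u | u w]; rewrite /path_sq; [lia | apply/idP/idP; lia]. Qed.

Lemma path_tree_spanning : spanning_tree (@path_sq n) path_tree.
Proof.
have sym : symmetric (@path_tree n) by move=> u w; rewrite /path_tree orbC.
split=> //; first by move=> u w; rewrite /path_tree /path_sq; lia.
  apply: connected_of_lower_nbr sym _ => v v_gt0.
  have lt_vn : v.-1 < n by have := ltn_ord v; lia.
  by exists (Ordinal lt_vn); rewrite /path_tree /=; lia.
apply: acyclic_of_lower_nbr_uniq sym _ => u a b; rewrite /path_tree => *.
apply: ord_inj; lia.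
Qed.

Lemma skip_tree_spanning : spanning_tree (@path_sq n) skip_tree.
Proof.
have sym : symmetric (@skip_tree n) by move=> u w; rewrite /skip_tree; apply/idP/idP; lia.
split=> //; first by move=> u w; rewrite /skip_tree /path_sq; lia.
  apply: connected_of_lower_nbr sym _ => v v_gt0.
  have lt_wn : (if v < 2 then 0 else v - 2) < n by have := ltn_ord v; case: ifP; lia.
  by exists (Ordinal lt_wn); rewrite /skip_tree /=; case: ifP; lia.
apply: acyclic_of_lower_nbr_uniq sym _ => u a b; rewrite /skip_tree => *.
apply: ord_inj; lia.
Qed.

Lemma path_sq_connected : connected_graph (@path_sq n).
Proof.
have [_ sub conn _] := path_tree_spanning.
by move=> u v; apply: connect_sub (conn u v) => x y /sub /connect1.
Qed.
End HardInstance.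

Definition deletes_toward n (D : 'I_n -> {set 'I_n}) (rightward : bool) (v : 'I_n) : bool :=
  [exists w : 'I_n, (if rightward then w == v.+1 :> nat else w.+1 == v :> nat) && (w \in D v)].
Notation deletes_left D := (deletes_toward D false).
Notation deletes_right D := (deletes_toward D true).

Section PathEdgeDeletion.
Variables (n : nat) (D : 'I_n -> {set 'I_n}).
Hypothesis D_card : forall v, #|D v| <= 1.
Hypothesis path_edge_deleted :
  forall u w : 'I_n, 0 < u -> w = u.+1 :> nat -> (w \in D u) || (u \in D w).

Lemma deletes_left_right v : deletes_left D v -> deletes_right D v -> False.
Proof.
case/existsP=> a /andP[/eqP a_v Da] /existsP[b /andP[/eqP b_v Db]].
by have a_b := card_le1_eqP (D_card v) a b Da Db; move: a_v b_v; rewrite a_b; lia.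
Qed.

Lemma deletes_left_succ (u w : 'I_n) :
  w = u.+1 :> nat -> deletes_left D u -> deletes_left D w.
Proof.
move=> w_u left_u; have u_gt0 : 0 < u by case/existsP: left_u => a /andP[/eqP <- _].
case/orP: (path_edge_deleted u_gt0 w_u) => [Duw | Dwu].
  by case: (deletes_left_right left_u); apply/existsP; exists w; rewrite w_u eqxx.
by apply/existsP; exists u; rewrite w_u eqxx.
Qed.

Lemma deletes_left_monotone (y z : 'I_n) : y <= z -> deletes_left D y -> deletes_left D z.
Proof.
move=> le_yz left_y; have [k z_yk] : exists k, z = y + k :> nat by exists (z - y); lia.
elim: k z z_yk {le_yz} => [|k IHk] z z_yk; first by rewrite (_ : z = y) //; apply: ord_inj; lia.
have lt_yk : y + k < n by have := ltn_ord z; lia.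
by apply: (@deletes_left_succ (Ordinal lt_yk)); rewrite ?IHk //= z_yk addnS.
Qed.

Lemma deletes_left_before_right (y x : 'I_n) :
  y < x -> deletes_left D y -> deletes_right D x -> False.
Proof.
move=> lt_yx /(@deletes_left_monotone y x) left_x; apply: deletes_left_right.
exact/left_x/ltnW.
Qed.

Lemma deletes_left_after_not_right (x y : 'I_n) :
  0 < x -> x < y -> ~~ deletes_right D x -> deletes_left D y.
Proof.
move=> x_gt0 lt_xy not_right_x; have lt_x1n : x.+1 < n by have := ltn_ord y; lia.
pose x1 := Ordinal lt_x1n; apply: (@deletes_left_monotone x1) => //.
case/orP: (@path_edge_deleted x x1 x_gt0 erefl) => [Dxx1 | Dx1x].
  by case/negP: not_right_x; apply/existsP; exists x1; rewrite Dxx1 eqxx.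
by apply/existsP; exists x; rewrite Dx1x eqxx.
Qed.
End PathEdgeDeletion.

Definition near (K p u : nat) : bool := (p < u + K) && (u < p + K).

Lemma same_view_path_sq n (T1 T2 G' T1' T2' : rel 'I_n) (id id' : 'I_n -> nat) phi k
    (u : 'I_n) :
  (forall w : 'I_n, near (2 * k).+1 u w ->
     same_input_at path_sq T1 T2 id G' T1' T2' id' phi w) ->
  same_view path_sq T1 T2 id G' T1' T2' id' phi k u.
Proof.
elim: k u => [|k IHk] u inputs; (split; first by apply: inputs; rewrite /near; lia) => //.
move=> w sq_uw; apply: IHk => w' near_ww'; apply: inputs.
by move: sq_uw near_ww'; rewrite /path_sq /near; lia.
Qed.

(* [mirror f p P] sends p to P, reflecting when [f]; near P it is inverted by
   [mirror f P p]. *)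
Definition mirror (f : bool) (p P u : nat) : nat := if f then p + P - u else P + u - p.

Section Relabel.
Variables (m r K p P : nat) (f : bool) (id' : 'I_m.+1 -> nat).
Variables (S M : Type) (A : local_algo S M).
Local Notation n := m.+1.
Implicit Types u w y : 'I_n.
(* An r-round view reaches positions within 2 r, whose inputs involve 2 more. *)
Hypothesis view_in_window : 2 * r + 2 < K.
Hypotheses (p_gt : K < p) (p_lt : p + K <= n) (P_gt : K < P) (P_lt : P + K <= n).
Hypothesis id'_inj : injective id'.
Hypothesis id'_window : forall w : 'I_n, near K P w -> id' w = mirror f P p w.

Definition relabel (u : 'I_n) : 'I_n := inord (mirror f p P u).

Lemma relabel_val u : near K p u -> relabel u = mirror f p P u :> nat.
Proof. by rewrite /near => near_u; rewrite inordK // /mirror; case: f; lia. Qed.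

Lemma near_relabel u : near K p u -> near K P (relabel u).
Proof.
move=> near_u; rewrite /near relabel_val // /mirror.
by move: near_u; rewrite /near; case: f; lia.
Qed.

Lemma id'_relabel u : near K p u -> id' (relabel u) = u.
Proof.
move=> near_u; rewrite id'_window ?near_relabel // relabel_val // /mirror.
by move: near_u; rewrite /near; case: f; lia.
Qed.

Lemma relabel_onto y : near K P y -> exists2 w : 'I_n, near K p w & relabel w = y.
Proof.
rewrite /near => near_y; have lt_wn : mirror f P p y < n by rewrite /mirror; case: f; lia.
have near_w : near K p (Ordinal lt_wn) by rewrite /near /mirror /=; case: f; lia.
exists (Ordinal lt_wn) => //; apply: ord_inj; rewrite relabel_val //= /mirror.
by case: f; lia.
Qed.

Lemma path_sq_relabel u w : near K p u -> near K p w ->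
  path_sq (relabel u) (relabel w) = path_sq u w.
Proof.
move=> near_u near_w; rewrite /path_sq !relabel_val //.
by move: near_u near_w; rewrite /near /mirror; case: f => *; apply/idP/idP; lia.
Qed.

Lemma path_tree_relabel u w : near K p u -> near K p w ->
  path_tree (relabel u) (relabel w) = path_tree u w.
Proof.
move=> near_u near_w; rewrite /path_tree !relabel_val //.
by move: near_u near_w; rewrite /near /mirror; case: f => *; apply/idP/idP; lia.
Qed.

Lemma skip_tree_relabel u w : near K p u -> near K p w ->
  skip_tree (relabel u) (relabel w) = skip_tree u w.
Proof.
move=> near_u near_w; rewrite /skip_tree !relabel_val //.
by move: near_u near_w; rewrite /near /mirror; case: f => *; apply/idP/idP; lia.
Qed.

Lemma same_input_relabel u : near (2 * r).+1 p u ->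
  same_input_at path_sq path_tree skip_tree (@nat_of_ord n)
                path_sq path_tree skip_tree id' relabel u.
Proof.
move=> near_u; have near_nbr w : path_sq u w -> near K p w.
  by move: near_u; rewrite /path_sq /near; lia.
have near_u' : near K p u by move: near_u; rewrite /near; lia.
split; first exact: id'_relabel.
  apply: nbrs_relabel (@ord_inj n) id'_inj _ _ _ => [w /near_nbr | w sq_uw | y sq_y].
  - exact: id'_relabel.
  - by rewrite path_sq_relabel // near_nbr.
  have [|w near_w w_y] := @relabel_onto y.
    by move: near_u sq_y; rewrite /near /path_sq relabel_val // /mirror; case: f; lia.
  by exists w; rewrite // -path_sq_relabel // w_y.
by move=> w /near_nbr near_w; rewrite id'_relabel // path_tree_relabel // skip_tree_relabel.
Qed.

Local Notation center := (inord p : 'I_n).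
Local Notation D := (out_del path_sq (@nat_of_ord n)
                       (la_output A path_sq path_tree skip_tree (@nat_of_ord n) r)).
Local Notation D' := (out_del path_sq id' (la_output A path_sq path_tree skip_tree id' r)).

Lemma center_val : center = p :> nat.
Proof. by rewrite inordK //; lia. Qed.

Lemma near_center : near K p center.
Proof. by rewrite /near center_val; lia. Qed.

Lemma relabel_center : relabel center = P :> nat.
Proof. by rewrite relabel_val ?near_center // center_val /mirror; case: f; lia. Qed.

Lemma relabel_out_del w : w \in D center -> relabel w \in D' (relabel center).
Proof.
have same_out : la_output A path_sq path_tree skip_tree id' r (relabel center) =
                la_output A path_sq path_tree skip_tree (@nat_of_ord n) r center.
  rewrite /la_output; congr la_out; apply: la_state_same_view.
  apply: same_view_path_sq => w' near_w'.
  by apply: same_input_relabel; rewrite -center_val.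
rewrite !inE same_out => /andP[sq_cw out_w].
have near_w : near K p w by move: sq_cw; rewrite /path_sq /near center_val; lia.
by rewrite path_sq_relabel ?near_center // sq_cw id'_relabel.
Qed.

Lemma deletes_toward_relabel d :
  deletes_toward D d center -> deletes_toward D' (f (+) d) (relabel center).
Proof.
case/existsP=> w /andP[w_c Dw]; apply/existsP; exists (relabel w).
rewrite relabel_out_del // andbT.
have near_w : near K p w by move: w_c; rewrite center_val /near; case: d; lia.
rewrite !relabel_val ?near_center //.
by move: w_c near_w; rewrite center_val /near /mirror; case: f; case: d => /=; lia.
Qed.
End Relabel.

Lemma valid_step1_path_edges n (Ad D : 'I_n -> {set 'I_n}) :
  valid_step1 path_sq path_tree skip_tree Ad D ->
  (forall v, #|D v| <= 1) /\
  (forall u w : 'I_n, 0 < u -> w = u.+1 :> nat -> (w \in D u) || (u \in D w)).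
Proof.
case=> [[_ D_card _ _ _] [_ T2_def]]; split=> // u w u_gt0 w_u.
have not_skip : skip_tree u w = false by apply/negbTE; rewrite /skip_tree w_u; lia.
move: (T2_def u w); rewrite not_skip /path_tree w_u eqxx /= => /esym/negbT/norP[].
by rewrite negbK orbC.
Qed.

(* [n + w] is fresh: the copied identifiers are below n. *)
Definition two_window_id n (K p q P1 P2 : nat) (f1 f2 : bool) (w : 'I_n) : nat :=
  if near K P1 w then mirror f1 P1 p w
  else if near K P2 w then mirror f2 P2 q w else n + w.

Lemma two_window_id_inj n K p q P1 P2 f1 f2 : K < p -> p + 2 * K <= q -> q + K <= n ->
  injective (@two_window_id n K p q P1 P2 f1 f2).
Proof.
move=> p_gt q_gt q_lt x y; have := ltn_ord x; have := ltn_ord y.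
rewrite /two_window_id /near /mirror.
by case: f1; case: f2; do !case: ifP => ? ; move=> ? ? ?; apply: ord_inj; lia.
Qed.

Section LowerBound.
Variables (S M : Type) (A : local_algo S M) (T : nat -> nat).
Hypothesis A_solves : solves_in A T.
Variable m : nat.
Local Notation n := m.+1.
Local Notation r := (T n).
Local Notation K := (2 * r + 3).
Hypothesis n_large : 10 * K <= n.
Local Notation D id := (out_del path_sq id (la_output A path_sq path_tree skip_tree id r)).

Lemma path_edges_deleted (id : 'I_n -> nat) : injective id ->
  (forall v, #|D id v| <= 1) /\
  (forall u w : 'I_n, 0 < u -> w = u.+1 :> nat -> (w \in D id u) || (u \in D id w)).
Proof.
move=> id_inj; have [_ valid] := A_solves (@path_sq_simple n) (@path_sq_connected n) id_inj
                                   (@path_tree_spanning n) (@skip_tree_spanning n).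
exact: valid_step1_path_edges valid.
Qed.

Lemma far_deleting_pair_contra p q : K < p -> p + 3 * K <= q -> q + K <= n ->
  (exists d, deletes_toward (D (@nat_of_ord n)) d (inord p)) ->
  (exists d, deletes_toward (D (@nat_of_ord n)) d (inord q)) -> False.
Proof.
move=> p_gt q_gt q_lt [d1 del_p] [d2 del_q].
(* Orient the copies so that the copy of p deletes leftward and that of q rightward. *)
pose id' := @two_window_id n K p q (3 * K) (6 * K) d1 (~~ d2).
have id'_inj : injective id' by apply: two_window_id_inj; lia.
have id'_P1 (w : 'I_n) : near K (3 * K) w -> id' w = mirror d1 (3 * K) p w.
  by rewrite /id' /two_window_id => ->.
have id'_P2 (w : 'I_n) : near K (6 * K) w -> id' w = mirror (~~ d2) (6 * K) q w.
  move=> near_w; rewrite /id' /two_window_id near_w ifF //.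
  by move: near_w; rewrite /near; lia.
have [D'_card D'_path] := path_edges_deleted id'_inj.
have left_P1 : deletes_toward (D id') (d1 (+) d1) (relabel p (3 * K) d1 (inord p)).
  by apply: (deletes_toward_relabel _ _ _ _ _ id'_inj id'_P1 del_p); lia.
have right_P2 : deletes_toward (D id') (~~ d2 (+) d2) (relabel q (6 * K) (~~ d2) (inord q)).
  by apply: (deletes_toward_relabel _ _ _ _ _ id'_inj id'_P2 del_q); lia.
rewrite addbb in left_P1; rewrite addNb addbb in right_P2.
apply: (deletes_left_before_right D'_card D'_path _ left_P1 right_P2).
by rewrite !(relabel_center (r := r) (K := K)) //; lia.
Qed.

Lemma large_instance_contra : False.
Proof.
have [D_card D_path] := path_edges_deleted (@ord_inj n).
have inord_val k : k < n -> (inord k : 'I_n) = k :> nat by move=> lt_kn; rewrite inordK.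
have left_after x y : 0 < x -> x < y -> y < n ->
    ~~ deletes_right (D (@nat_of_ord n)) (inord x) -> deletes_left (D (@nat_of_ord n)) (inord y).
  move=> x_gt0 lt_xy lt_yn; apply: (deletes_left_after_not_right D_card D_path);
    rewrite !inord_val //; lia.
have [right_3 | not_right_3] := boolP (deletes_right (D (@nat_of_ord n)) (inord (3 * K))).
  have [right_6 | not_right_6] := boolP (deletes_right (D (@nat_of_ord n)) (inord (6 * K))).
    by apply: (@far_deleting_pair_contra (3 * K) (6 * K)); try lia; exists true.
  apply: (@far_deleting_pair_contra (3 * K) (9 * K)); try lia; first by exists true.
  by exists false; apply: left_after not_right_6; lia.
apply: (@far_deleting_pair_contra (6 * K) (9 * K)); try lia;
  by exists false; apply: left_after not_right_3; lia.
Qed.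
End LowerBound.

Lemma solves_in_rounds_lower_bound S M (A : local_algo S M) T :
  solves_in A T -> forall n, n <= 20 * T n + 30.
Proof.
move=> A_solves [|m]; rewrite // leqNgt; apply/negP => large.
by apply: (large_instance_contra A_solves (m := m)); lia.
Qed.

Theorem mainTheorem1 :
  forall (S M : Type) (A : local_algo S M) (T : nat -> nat),
    solves_in A T ->
    exists c N : nat, 0 < c /\ forall n, N <= n -> n <= c * T n.
Proof.
move=> S M A T A_solves; exists 50, 31; split=> // n n_ge31.
by have := solves_in_rounds_lower_bound A_solves n; lia.
Qed.
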